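(* Let $R=k\{x_1,\ldots,x_n;\,Q,\preceq\}$ be a PBW algebra and $M$ an $R$-subbimodule of $R^s$. Suppose there exist $p,q\ge1$ and a matrix $H=\begin{pmatrix}H_1\\ H_2\end{pmatrix}\in M_{(s+p)\times q}(R)$ with $H_1\in M_{s\times q}(R)$, $H_2\in M_{p\times q}(R)$ such that (i) $(\mathfrak m^s(\mathbf h)\otimes\mathbf1)H_1=\mathbf hH_1$ for all $\mathbf h\in(R^{\rm env})^s$, and (ii) $M=\{\mathbf h\in R^s:\ \exists\,\mathbf h''\in(R^{\rm env})^p$ with $(\mathbf h\otimes\mathbf1,\mathbf h'')\in\mathrm{Syz}(H)\}$. Write each $\mathbf h\in(R^{\rm env})^{s+p}$ as $\mathbf h=(\mathbf h',\mathbf h'')$ with $\mathbf h'\in(R^{\rm env})^s$, $\mathbf h''\in(R^{\rm env})^p$. Then: (1) if $\{\mathbf h_1,\ldots,\mathbf h_t\}\subseteq(R^{\rm env})^{s+p}$ generates $\mathrm{Syz}(H)$ as an $R$-bimodule, then $M={}_R\langle\mathfrak m^s(\mathbf h_1'),\ldots,\mathfrak m^s(\mathbf h_t')\rangle_R$; (2) if moreover $\{\mathbf h_1,\ldots,\mathbf h_t\}$ is a left Gröbner basis of the left $R^{\rm env}$-module $\mathrm{Syz}(H)$ with respect to POT on $(R^{\rm env})^{s+p}$ built from any one of $\preceq^*,\preceq^c,\preceq_*,\preceq_c$ on $\mathbb N^{2n}$, then $\{\mathfrak m^s(\mathbf h_1'),\ldots,\mathfrak m^s(\mathbf h_t')\}\setminus\{0\}$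 is a two-sided Gröbner basis of $M$ with respect to POT on $R^s$ built from $\preceq$.
   Context: $k$ is a field; $x^\alpha=x_1^{\alpha_1}\cdots x_n^{\alpha_n}$. A PBW algebra $R=k\{x_1,\ldots,x_n;Q,\preceq\}$ is a quotient of $k\langle x_1,\ldots,x_n\rangle$ by the two-sided ideal generated by $Q=\{x_jx_i-q_{ji}x_ix_j-p_{ji};\,i<j\}$, $q_{ji}\in k^*$, each $p_{ji}$ a combination of standard monomials with exponents $\prec\epsilon_i+\epsilon_j$ for an admissible order $\preceq$ (total, compatible with addition, $0$ minimal), such that the standard monomials form a $k$-basis. $R^{\rm env}=R\otimes_kR^{\rm op}$ is the PBW algebra in the variables $x_1\otimes1,\ldots,x_n\otimes1,1\otimes x_n,\ldots,1\otimes x_1$ (in this order); exponent $(\alpha,\beta)\in\mathbb N^{2n}$ corresponds to $x^\alpha\otimes x^{\beta^{\rm op}}$, $\beta^{\rm op}=(\beta_n,\ldots,\beta_1)$. With $\alpha\preceq^{\rm op}\beta$ iff $\alpha^{\rm op}\preceq\beta^{\rm op}$: $(\alpha,\beta)\prec^*(\gamma,\delta)$ iff $\beta\prec^{\rm op}\delta$ or ($\beta=\delta$, $\alpha\prec\gamma$); $(\alpha,\beta)\prec_*(\gamma,\delta)$ iff $\alpha\prec\gamma$ or ($\alpha=\gamma$, $\beta\prec^{\rm op}\delta$); $(\alpha,\beta)\prec^c(\gamma,\delta)$ iff $\alpha+\beta^{\rm op}\prec\gamma+\delta^{\rm op}$ or (equality and $\beta^{\rm op}\prec\delta^{\rm op}$);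 $(\alpha,\beta)\prec_c(\gamma,\delta)$ iff $\alpha+\beta^{\rm op}\prec\gamma+\delta^{\rm op}$ or (equality and $\alpha\prec\gamma$). For an admissible order $\le$ on $\mathbb N^m$, POT on $\mathbb N^m\times\{1,\ldots,s\}$ is: $(\alpha,i)<(\beta,j)$ iff $i>j$, or $i=j$ and $\alpha<\beta$. For $A=R$ or $R^{\rm env}$, a nonzero $\mathbf f=\sum c_{(\alpha,i)}x^\alpha\mathbf e_i\in A^s$ has $\exp(\mathbf f)$ the largest index with nonzero coefficient; $\mathrm{Exp}(L)=\{\exp(\mathbf f):0\ne\mathbf f\in L\}$; $(\alpha,i)+\mathbb N^m=\{(\alpha+\gamma,i)\}$. A finite $G\subseteq L\setminus\{0\}$ is a left Gröbner basis of a left submodule $L\subseteq A^s$ if $L={}_A\langle G\rangle$ and $\mathrm{Exp}(L)=\bigcup_{\mathbf g\in G}(\exp(\mathbf g)+\mathbb N^m)$; a finite $G\subseteq M\setminus\{0\}$ is a two-sided Gröbner basis of an $R$-subbimodule $M\subseteq R^s$ if $M={}_R\langle G\rangle_R$ and $\mathrm{Exp}(M)=\bigcup_{\mathbf g\in G}(\exp(\mathbf g)+\mathbb N^n)$. $R^q$ is a left $R^{\rm env}$-module via $(r\otimes r')\mathbf f=(rf_1r',\ldots,rf_qr')$; each $(R^{\rm env})^m$ is an $R$-bimodule via $r(a\otimes b)r'=ra\otimes br'$ (coinciding with left multiplication by $R^{\rm env}$). For $\mathbf f=(f_i),\mathbf g=(g_i)\in R^s$, $\mathbf f\otimes\mathbf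 g=(f_i\otimes g_i)_i$ and $\mathbf 1=(1,\ldots,1)$. $\mathfrak m^s:(R^{\rm env})^s\to R^s$ applies $\mathfrak m(r\otimes r')=rr'$ coordinatewise. For a matrix $H\in M_{m\times q}(R)$ with rows $\mathbf r_1,\ldots,\mathbf r_m\in R^q$ and $\mathbf h=(h_1,\ldots,h_m)\in(R^{\rm env})^m$, $\mathbf hH=\sum_ih_i\mathbf r_i\in R^q$, and the syzygy bimodule $\mathrm{Syz}(H)$ is the kernel of $(R^{\rm env})^m\to R^q$, $\mathbf h\mapsto\mathbf hH$. *)

From HB Require Import structures.
From mathcomp Require Import all_boot all_order all_algebra.
Set Implicit Arguments. Unset Strict Implicit. Unset Printing Implicit Defensive.
Import GRing.Theory.
Local Open Scope ring_scope.

Definition expo (n : nat) := {ffun 'I_n -> nat}.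
Definition addE {n} (a b : expo n) : expo n := [ffun i => (a i + b i)%N].
Definition zeroE {n} : expo n := [ffun _ => 0%N].
Definition epsE {n} (i : 'I_n) : expo n := [ffun j => if j == i then 1%N else 0%N].
Definition revE {n} (a : expo n) : expo n := [ffun i => a (rev_ord i)].

Definition admissible {n} (le : expo n -> expo n -> Prop) : Prop :=
  (forall a, le a a) /\
  (forall a b, le a b -> le b a -> a = b) /\
  (forall a b c, le a b -> le b c -> le a c) /\
  (forall a b, le a b \/ le b a) /\
  (forall a b c, le a b -> le (addE a c) (addE b c)) /\
  (forall a, le zeroE a).

Definition strict {E : Type} (le : E -> E -> Prop) (a b : E) : Prop := le a b /\ a <> b.

Section EnvOrders.
Variables (n : nat) (le : expo n -> expo n -> Prop).
Let lt := strict le.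
Let lt_op (a b : expo n) := lt (revE a) (revE b).
Definition star_lt (x y : expo n * expo n) : Prop :=
  lt_op x.2 y.2 \/ (x.2 = y.2 /\ lt x.1 y.1).
Definition lowstar_lt (x y : expo n * expo n) : Prop :=
  lt x.1 y.1 \/ (x.1 = y.1 /\ lt_op x.2 y.2).
Definition c_lt (x y : expo n * expo n) : Prop :=
  lt (addE x.1 (revE x.2)) (addE y.1 (revE y.2)) \/
  (addE x.1 (revE x.2) = addE y.1 (revE y.2) /\ lt (revE x.2) (revE y.2)).
Definition lowc_lt (x y : expo n * expo n) : Prop :=
  lt (addE x.1 (revE x.2)) (addE y.1 (revE y.2)) \/
  (addE x.1 (revE x.2) = addE y.1 (revE y.2) /\ lt x.1 y.1).
End EnvOrders.

Section Alg.
Variable k : fieldType.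

(* e is a k-basis of V and cf v i is the i-th coordinate of v *)
Definition coord_basis {V : lmodType k} {I : eqType} (e : I -> V) (cf : V -> I -> k) : Prop :=
  (forall v, exists s : seq I, [/\ uniq s,
      v = \sum_(i <- s) cf v i *: e i & forall i, i \notin s -> cf v i = 0]) /\
  (forall (s : seq I) (c : I -> k), uniq s -> forall i,
      cf (\sum_(j <- s) c j *: e j) i = if i \in s then c i else 0).

Definition mono {R : algType k} {n} (x : 'I_n -> R) (a : expo n) : R :=
  \prod_(i < n) x i ^+ a i.

Definition is_PBW {R : algType k} {n} (x : 'I_n -> R) (q : 'I_n -> 'I_n -> k)
  (pp : 'I_n -> 'I_n -> R) (le : expo n -> expo n -> Prop) (cf : R -> expo n -> k) : Prop :=
  [/\ admissible le,
      coord_basis (mono x) cf &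
      forall i j : 'I_n, (i < j)%N ->
        [/\ q j i != 0,
            x j * x i = q j i *: (x i * x j) + pp j i &
            forall a, cf (pp j i) a != 0 -> strict le a (addE (epsE i) (epsE j))]].

(* Renv together with tens is the k-algebra R (x)_k R^op, with
   tens a b = a (x) b; cf2 gives coordinates in the basis x^a (x) x^b. *)
Definition is_env {R Renv : algType k} {n} (x : 'I_n -> R) (tens : R -> R -> Renv)
  (cf2 : Renv -> expo n * expo n -> k) : Prop :=
  (forall a b c, tens (a + b) c = tens a c + tens b c) /\
  (forall a b c, tens a (b + c) = tens a b + tens a c) /\
  (forall (z : k) a b, tens (z *: a) b = z *: tens a b) /\
  (forall (z : k) a b, tens a (z *: b) = z *: tens a b) /\
  (forall a b c d, tens a b * tens c d = tens (a * c) (d * b)) /\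
  tens 1 1 = 1 /\
  coord_basis (fun ab : expo n * expo n => tens (mono x ab.1) (mono x ab.2)) cf2.

Definition is_mult {R Renv : algType k} (tens : R -> R -> Renv) (mm : {linear Renv -> R}) : Prop :=
  forall a b, mm (tens a b) = a * b.

End Alg.

Section Rows.
Variables (k : fieldType) (R Renv : algType k) (tens : R -> R -> Renv) (mm : Renv -> R).

(* action of Renv on R: (r (x) r') f = r f r'; equals m((r (x) r')(f (x) 1)) *)
Definition env_act (u : Renv) (f : R) : R := mm (u * tens f 1).

Definition vmul {m q} (h : 'rV[Renv]_m) (H : 'M[R]_(m, q)) : 'rV[R]_q :=
  \row_j \sum_(i < m) env_act (h 0 i) (H i j).

Definition Syz {m q} (H : 'M[R]_(m, q)) (h : 'rV[Renv]_m) : Prop := vmul h H = 0.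

Definition mmv {m} (h : 'rV[Renv]_m) : 'rV[R]_m := map_mx mm h.
Definition tens1 {m} (f : 'rV[R]_m) : 'rV[Renv]_m := map_mx (fun r => tens r 1) f.

Definition bactR {m} (r r' : R) (f : 'rV[R]_m) : 'rV[R]_m := map_mx (fun a => r * a * r') f.
Definition bactE {m} (r r' : R) (h : 'rV[Renv]_m) : 'rV[Renv]_m := map_mx (fun a => tens r r' * a) h.

Definition subbimodule {m} (M : 'rV[R]_m -> Prop) : Prop :=
  [/\ M 0, (forall f g, M f -> M g -> M (f + g)) &
      (forall r r' f, M f -> M (bactR r r' f))].

Definition bigenR {m} (G : seq 'rV[R]_m) (f : 'rV[R]_m) : Prop :=
  exists l : seq ('rV[R]_m * R * R),
    all (fun x => x.1.1 \in G) l /\ f = \sum_(x <- l) bactR x.1.2 x.2 x.1.1.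
Definition bigenE {m} (G : seq 'rV[Renv]_m) (h : 'rV[Renv]_m) : Prop :=
  exists l : seq ('rV[Renv]_m * R * R),
    all (fun x => x.1.1 \in G) l /\ h = \sum_(x <- l) bactE x.1.2 x.2 x.1.1.
Definition lgenE {m} (G : seq 'rV[Renv]_m) (h : 'rV[Renv]_m) : Prop :=
  exists l : seq ('rV[Renv]_m * Renv),
    all (fun x => x.1 \in G) l /\ h = \sum_(x <- l) map_mx (fun a => x.2 * a) x.1.

End Rows.

Section Groebner.
Variable k : fieldType.

Definition pot_lt {E : Type} (lt : E -> E -> Prop) {m} (x y : E * 'I_m) : Prop :=
  (y.2 < x.2)%N \/ (x.2 = y.2 /\ lt x.1 y.1).

Variables (T : zmodType) (E : Type) (coef : T -> E -> k) (lt : E -> E -> Prop)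
  (shift : E -> E -> Prop).

Definition is_exp {m} (f : 'rV[T]_m) (e : E * 'I_m) : Prop :=
  coef (f 0 e.2) e.1 <> 0 /\
  forall e' : E * 'I_m, coef (f 0 e'.2) e'.1 <> 0 -> e' = e \/ pot_lt lt e' e.

Definition Exp_set {m} (L : 'rV[T]_m -> Prop) (e : E * 'I_m) : Prop :=
  exists f, [/\ L f, f <> 0 & is_exp f e].

Definition exp_cond {m} (L : 'rV[T]_m -> Prop) (G : seq 'rV[T]_m) : Prop :=
  forall e, Exp_set L e <->
    exists2 g, g \in G & exists eg, [/\ is_exp g eg, eg.2 = e.2 & shift eg.1 e.1].

Definition GB {m} (gen : seq 'rV[T]_m -> 'rV[T]_m -> Prop)
  (L : 'rV[T]_m -> Prop) (G : seq 'rV[T]_m) : Prop :=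
  [/\ forall g, g \in G -> L g /\ g <> 0,
      forall f, L f <-> gen G f &
      exp_cond L G].
End Groebner.

Definition shiftR {n} (a b : expo n) : Prop := exists c, b = addE a c.
Definition shiftEnv {n} (a b : expo n * expo n) : Prop :=
  exists c d, b.1 = addE a.1 c /\ b.2 = addE a.2 d.

(* coefficient of x^alpha (x) x^{beta^op} in u, i.e. of the PBW monomial with
   exponent (alpha, beta) in Renv *)
Definition coefEnv {k : fieldType} {Renv : Type} {n} (cf2 : Renv -> expo n * expo n -> k)
  (u : Renv) (ab : expo n * expo n) : k := cf2 u (ab.1, revE ab.2).

(* By (i) and (ii), [f] is in [M] iff [(f (x) 1, h'')] is a syzygy
   for some [h''], and conversely (i) shows that [m(h')] lies in [M] for every
   syzygy [h]; as [m] commutes with the bimodule actions, bimodule generators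
   of [Syz(H)] are sent onto bimodule generators of [M].
   For Groebner bases, the basic fact is that in a PBW algebra the leading
   exponent of [x^a x^b] is [a + b]: this is proved by well-founded induction
   along the admissible order (well founded by Dickson's lemma), since the
   relations only create smaller terms.  Hence [exp(x^c f) = c + exp(f)], and
   [m] sends a PBW monomial [x^a (x) x^(b^op)] to an element of leading
   exponent [a + b^op].  If [f] in [M] has exponent [(a, i)], the syzygy
   [(f (x) 1, h'')] (for the orders [*] and [c]) or [(1 (x) f, h'')] (for the
   orders [_*] and [_c], a syzygy by (i)) has exponent [((a, 0), i)], resp.
   [((0, a^op), i)].  A Groebner basis element whose exponent divides it has
   an exponent of the same shape, on which the order is compatible with
   [(a, b) |-> a + b^op]; so its image under [m] has an exponent dividing
   [(a, i)]. *)

From Pilot Require Import Defs.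
From mathcomp Require Import all_boot all_order all_algebra.
From Stdlib Require Import Classical ClassicalEpsilon.
Import GRing.Theory.
Set Implicit Arguments. Unset Strict Implicit. Unset Printing Implicit Defensive.
Local Open Scope ring_scope.

(** * Dickson's lemma and well-foundedness of admissible orders *)

Lemma nat_tail_min (g : nat -> nat) k :
  exists j, (k <= j)%N /\ forall j', (k <= j')%N -> (g j <= g j')%N.
Proof.
suff: forall v j, (k <= j)%N -> (g j <= v)%N ->
    exists j0, (k <= j0)%N /\ forall j', (k <= j')%N -> (g j0 <= g j')%N.
  by apply; apply: leqnn.
elim=> [|v IH] j kj gjv.
  by exists j; split=> // j' _; move: gjv; rewrite leqn0 => /eqP ->.
have [[j' [kj' gj'j]] | j_min] := classic (exists j', (k <= j')%N /\ (g j' < g j)%N).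
  by apply: (IH j') => //; rewrite -ltnS (leq_trans gj'j).
exists j; split=> // j' kj'; rewrite leqNgt; apply/negP => gj'j.
by apply: j_min; exists j'.
Qed.

Lemma nondecreasing_subseq (g : nat -> nat) : exists psi : nat -> nat,
  (forall m, psi m < psi m.+1)%N /\ forall m, (g (psi m) <= g (psi m.+1))%N.
Proof.
pose tail_min k := constructive_indefinite_description _ (nat_tail_min g k).
pose psi := fix psi m := sval (tail_min (if m is m'.+1 then (psi m').+1 else 0%N)).
have psi_min m j : (psi m <= j)%N -> (g (psi m) <= g j)%N.
  by case: m => [|m] /=; case: (tail_min _) => /= j0 [k_j0 j0_min] j0j;
    apply: j0_min; apply: leq_trans j0j.
have psi_incr m : (psi m < psi m.+1)%N by rewrite /=; case: (tail_min _) => /= ? [].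
by exists psi; split=> // m; apply/psi_min/ltnW.
Qed.

Lemma dickson n (f : nat -> expo n) :
  exists i j, (i < j)%N /\ forall c, (f i c <= f j c)%N.
Proof.
suff [phi [phi_incr phi_mono]] : exists phi : nat -> nat, (forall m, phi m < phi m.+1)%N /\
    forall c m, (f (phi m) c <= f (phi m.+1) c)%N.
  by exists (phi 0%N), (phi 1%N).
suff: forall J : seq 'I_n, exists phi : nat -> nat, (forall m, phi m < phi m.+1)%N /\
    forall c, c \in J -> forall m, (f (phi m) c <= f (phi m.+1) c)%N.
  by case/(_ (enum 'I_n)) => phi [? phi_mono]; exists phi; split=> // c; apply/phi_mono/mem_enum.
elim=> [|c J [phi [phi_incr phi_mono]]]; first by exists id.
have [psi [psi_incr psi_mono]] := nondecreasing_subseq (fun m => f (phi m) c).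
exists (phi \o psi); split=> [m|c']; first exact: homo_ltn ltn_trans phi_incr _ _ (psi_incr m).
rewrite inE => /predU1P [-> //| c'J] m.
by apply: (homo_leq leqnn leq_trans (phi_mono c' c'J)); apply/ltnW.
Qed.

Lemma addEC n (a b : expo n) : addE a b = addE b a.
Proof. by apply/ffunP => i; rewrite !ffunE addnC. Qed.
Lemma addEA n (a b c : expo n) : addE a (addE b c) = addE (addE a b) c.
Proof. by apply/ffunP => i; rewrite !ffunE addnA. Qed.
Lemma add0E n (a : expo n) : addE zeroE a = a.
Proof. by apply/ffunP => i; rewrite !ffunE. Qed.
Lemma addE0 n (a : expo n) : addE a zeroE = a.
Proof. by rewrite addEC add0E. Qed.
Lemma addEI n (c : expo n) : injective (addE c).
Proof. by move=> a b /ffunP E; apply/ffunP => i; move: (E i); rewrite !ffunE => /addnI. Qed.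
Lemma addE_eq0 n (a b : expo n) : addE a b = zeroE -> a = zeroE.
Proof.
move/ffunP=> E; apply/ffunP => i; move: (E i); rewrite !ffunE => /eqP.
by rewrite addn_eq0 => /andP [/eqP].
Qed.

Lemma revEK n : involutive (@revE n).
Proof. by move=> a; apply/ffunP => i; rewrite !ffunE rev_ordK. Qed.
Lemma revE0 n : revE (zeroE : expo n) = zeroE.
Proof. by apply/ffunP => i; rewrite !ffunE. Qed.
Lemma revED n (a b : expo n) : revE (addE a b) = addE (revE a) (revE b).
Proof. by apply/ffunP => i; rewrite !ffunE. Qed.

Section AdmissibleOrder.
Variables (n : nat) (le : expo n -> expo n -> Prop).
Hypothesis le_adm : admissible le.
Local Notation lt := (strict le).

Lemma le_refl a : le a a. Proof. by case: le_adm. Qed.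
Lemma le_anti a b : le a b -> le b a -> a = b. Proof. by case: le_adm => _ [h _]; apply: h. Qed.
Lemma le_trans a b c : le a b -> le b c -> le a c.
Proof. by case: le_adm => _ [_ [h _]]; apply: h. Qed.
Lemma le_addr a b c : le a b -> le (addE a c) (addE b c).
Proof. by case: le_adm => _ [_ [_ [_ [h _]]]]; apply: h. Qed.
Lemma le0E a : le zeroE a. Proof. by case: le_adm => _ [_ [_ [_ [_ h]]]]; apply: h. Qed.

Lemma le_addl a b c : le a b -> le (addE c a) (addE c b).
Proof. by rewrite ![addE c _]addEC; apply: le_addr. Qed.
Lemma le_addE a c : le a (addE c a).
Proof. by have := le_addr a (le0E c); rewrite add0E. Qed.

Lemma ltW a b : lt a b -> le a b. Proof. by case. Qed.
Lemma lt_irr a : ~ lt a a. Proof. by case. Qed.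
Lemma lt_le_trans a b c : lt a b -> le b c -> lt a c.
Proof. by move=> [ab nab] bc; split=> [|eac]; [apply: le_trans bc | subst; apply/nab/le_anti]. Qed.
Lemma le_lt_trans a b c : le a b -> lt b c -> lt a c.
Proof. by move=> ab [bc nbc]; split=> [|eac]; [apply: le_trans bc | subst; apply/nbc/le_anti]. Qed.
Lemma lt_trans a b c : lt a b -> lt b c -> lt a c.
Proof. by move=> /ltW; apply: le_lt_trans. Qed.
Lemma lt_addl a b c : lt a b -> lt (addE c a) (addE c b).
Proof. by move=> [ab nab]; split=> [|/addEI //]; apply: le_addl. Qed.
Lemma lt_addr a b c : lt a b -> lt (addE a c) (addE b c).
Proof. by rewrite ![addE _ c]addEC; apply: lt_addl. Qed.
Lemma not_lt0E a : ~ lt a zeroE.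
Proof. by move=> [a0 na0]; apply/na0/le_anti/le0E. Qed.
Lemma lt_addE_eps j a : lt a (addE (epsE j) a).
Proof.
split; first exact: le_addE.
by move/ffunP/(_ j)/eqP; rewrite !ffunE eqxx -{1}(add0n (a j)) eqn_add2r.
Qed.

(* An infinite descending chain contradicts Dickson's lemma, since a
   componentwise-larger exponent is larger for every admissible order. *)
Lemma admissible_wf : well_founded lt.
Proof.
move=> a0; apply: NNPP => not_acc0.
have down (b : {b | ~ Acc lt b}) : {b' : {b | ~ Acc lt b} | lt (sval b') (sval b)}.
  apply: constructive_indefinite_description; case: b => b not_acc /=.
  have [b' [b'b not_acc']] : exists b', lt b' b /\ ~ Acc lt b'.
    apply: NNPP => none; apply: not_acc; constructor => b' b'b.
    by apply: NNPP => ?; apply: none; exists b'.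
  by exists (exist _ b' not_acc').
pose chain := fix chain m := if m is m'.+1 then sval (down (chain m')) else exist _ a0 not_acc0.
pose f m := sval (chain m).
have f_decr : {homo f : i j / (i < j)%N >-> lt j i}.
  apply: (@homo_ltn _ f (fun a b => lt b a)) => [y x z xy yz|m].
    exact: (lt_trans yz xy).
  by rewrite /f /=; case: (down (chain m)).
have [i [j [ij fij]]] := dickson f.
have f_ij : f j = addE [ffun c => (f j c - f i c)%N] (f i).
  by apply/ffunP => c; rewrite !ffunE subnK ?fij.
have fi_fj : le (f i) (f j) by rewrite f_ij; apply: le_addE.
exact: lt_irr (lt_le_trans (f_decr _ _ ij) fi_fj).
Qed.

End AdmissibleOrder.

Section Coordinates.
Variables (k : fieldType) (V : lmodType k) (I : eqType) (e : I -> V) (cf : V -> I -> k).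
Hypothesis e_basis : Defs.coord_basis e cf.

Lemma coord_supp v : exists s : seq I, uniq s /\ forall i, cf v i <> 0 -> i \in s.
Proof.
case: e_basis => /(_ v) [s [uniq_s _ cf0]] _; exists s; split=> // i nz.
by apply: contraPT nz => /cf0 -> [].
Qed.

Lemma coord_expand v (s : seq I) : uniq s -> (forall i, cf v i <> 0 -> i \in s) ->
  v = \sum_(i <- s) cf v i *: e i.
Proof.
move=> uniq_s supp_s; case: e_basis => /(_ v) [t [uniq_t v_t cf0]] _.
have sum_on u : uniq u -> (forall i, cf v i <> 0 -> i \in u) -> {subset u <= s ++ t} ->
    \sum_(i <- undup (s ++ t)) cf v i *: e i = \sum_(i <- u) cf v i *: e i.
  move=> uniq_u supp_u sub_u.
  rewrite (bigID (mem u)) /= [X in _ + X]big1 ?addr0 => [|i /negP ui]; last first.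
    by case: (eqVneq (cf v i) 0) => [->|/eqP /supp_u //]; rewrite scale0r.
  rewrite -big_filter; apply/perm_big/uniq_perm; rewrite ?filter_uniq ?undup_uniq //.
  by move=> i; rewrite mem_filter mem_undup andb_idr // => /sub_u.
have supp_t i : cf v i <> 0 -> i \in t by move=> nz; apply: contraPT nz => /cf0 -> [].
rewrite {1}v_t -(sum_on t uniq_t supp_t) ?(sum_on s uniq_s supp_s) // => i;
  by rewrite mem_cat => ->; rewrite ?orbT.
Qed.

Lemma coordDZ a u v i : cf (a *: u + v) i = a * cf u i + cf v i.
Proof.
have [su [uniq_su supp_u]] := coord_supp u; have [sv [uniq_sv supp_v]] := coord_supp v.
pose s := undup (su ++ sv).
have supp_s w (sw : seq I) : {subset sw <= s} -> (forall i, cf w i <> 0 -> i \in sw) ->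
  forall i, cf w i <> 0 -> i \in s by move=> sub supp_w j /supp_w /sub.
have in_s j : (j \in s) = (j \in su) || (j \in sv) by rewrite mem_undup mem_cat.
have sub_u : {subset su <= s} by move=> j; rewrite in_s => ->.
have sub_v : {subset sv <= s} by move=> j; rewrite in_s orbC => ->.
have -> : a *: u + v = \sum_(j <- s) (a * cf u j + cf v j) *: e j.
  rewrite {1}(coord_expand (undup_uniq _) (supp_s _ _ sub_u supp_u)).
  rewrite {1}(coord_expand (undup_uniq _) (supp_s _ _ sub_v supp_v)).
  by rewrite scaler_sumr -big_split; apply: eq_bigr => j _; rewrite scalerA scalerDl.
case: e_basis => _ ->; rewrite ?undup_uniq //; case: ifPn => // /negP i_s.
have zero_off w (sw : seq I) : {subset sw <= s} -> (forall i, cf w i <> 0 -> i \in sw) -> cf w i = 0.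
  by move=> sub supp_w; case: (eqVneq (cf w i) 0) => // /eqP /supp_w /sub.
by rewrite (zero_off u su) ?(zero_off v sv) // mulr0 addr0.
Qed.

Lemma coordD u v i : cf (u + v) i = cf u i + cf v i.
Proof. by have := coordDZ 1 u v i; rewrite scale1r mul1r. Qed.
Lemma coord0 i : cf 0 i = 0.
Proof. by apply: (@addrI _ (cf 0 i)); rewrite -coordD !addr0. Qed.
Lemma coordZ a u i : cf (a *: u) i = a * cf u i.
Proof. by rewrite -(addr0 (a *: u)) coordDZ coord0 addr0. Qed.
Lemma coordB u v i : cf (u - v) i = cf u i - cf v i.
Proof. by rewrite -scaleN1r coordD coordZ mulN1r. Qed.
Lemma coord_sum (J : Type) (r : seq J) (Q : pred J) (F : J -> V) i :
  cf (\sum_(t <- r | Q t) F t) i = \sum_(t <- r | Q t) cf (F t) i.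
Proof. exact: (big_morph (cf^~ i) (fun u v => coordD u v i) (coord0 i)). Qed.
Lemma coord_basis_vec j i : cf (e j) i = (i == j)%:R.
Proof.
case: e_basis => _ /(_ [:: j] (fun _ => 1) isT i).
by rewrite big_seq1 scale1r inE; case: eqP.
Qed.
Lemma coord_eq0 v : (forall i, cf v i = 0) -> v = 0.
Proof.
move=> cf0; have [s [uniq_s supp_s]] := coord_supp v.
by rewrite (coord_expand uniq_s supp_s) big1 // => i _; rewrite cf0 scale0r.
Qed.

Definition supp_in (P : I -> Prop) (v : V) := forall i, cf v i <> 0 -> P i.

Lemma supp_in_sum (P : I -> Prop) (J : Type) (r : seq J) (Q : pred J) (c : J -> k) (w : J -> V) :
  (forall t, Q t -> c t <> 0 -> supp_in P (w t)) -> supp_in P (\sum_(t <- r | Q t) c t *: w t).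
Proof.
move=> Pw i; rewrite coord_sum => nz; apply: NNPP => notPi; apply/nz/big1 => t Qt.
rewrite coordZ; case: (eqVneq (c t) 0) => [->|/eqP ct]; first by rewrite mul0r.
by case: (eqVneq (cf (w t) i) 0) => [->|/eqP /(Pw t Qt ct) //]; rewrite mulr0.
Qed.

Lemma supp_inD P u v : supp_in P u -> supp_in P v -> supp_in P (u + v).
Proof.
move=> Pu Pv i; rewrite coordD.
by case: (eqVneq (cf u i) 0) => [->|/eqP /Pu //]; rewrite add0r; apply: Pv.
Qed.
Lemma supp_inZ P a v : supp_in P v -> supp_in P (a *: v).
Proof. by move=> Pv i; rewrite coordZ => nz; apply: Pv => v0; apply: nz; rewrite v0 mulr0. Qed.
Lemma supp_in_sub (P Q : I -> Prop) v : (forall i, P i -> Q i) -> supp_in P v -> supp_in Q v.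
Proof. by move=> PQ Pv i /Pv /PQ. Qed.
Lemma supp_in_basis_vec (P : I -> Prop) j : P j -> supp_in P (e j).
Proof. by move=> Pj i; rewrite coord_basis_vec; case: eqP => [->|]. Qed.

End Coordinates.

(** * Leading terms in a PBW algebra *)

Section ExponentInduction.
Variable n : nat.

Lemma expo_head (a : expo n) : a = zeroE \/
  exists j a', a = addE (epsE j) a' /\ forall l : 'I_n, (l < j)%N -> a' l = 0%N.
Proof.
have [j0 a_j0|a0] := pickP (fun j => 0 < a j)%N; last first.
  by left; apply/ffunP => i; rewrite ffunE; apply/eqP; rewrite -leqn0 leqNgt a0.
right; case: (@arg_minnP _ j0 (fun j => 0 < a j)%N (fun j : 'I_n => val j) a_j0) => j a_j j_min.
exists j, [ffun l => if l == j then (a l).-1 else a l]; split.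
  by apply/ffunP => l; rewrite !ffunE; case: eqP => [->|]; rewrite ?add1n ?prednK.
move=> l lj; rewrite ffunE; case: eqP => [lj'|_]; first by move: lj; rewrite lj' ltnn.
by apply/eqP; rewrite -leqn0 leqNgt; apply: contraTN lj => /j_min; rewrite -leqNgt.
Qed.

Definition degE (a : expo n) := (\sum_(i < n) a i)%N.

Lemma degE_add_eps j a : degE (addE (epsE j) a) = (degE a).+1.
Proof.
rewrite /degE (eq_bigr (fun i => (i == j) + a i)%N) => [|i _]; last by rewrite !ffunE.
by rewrite big_split /= (bigD1 j) //= eqxx big1 // => i /negbTE ->.
Qed.

Lemma expo_ind (P : expo n -> Prop) : P zeroE ->
  (forall (j : 'I_n) (a : expo n), (forall l : 'I_n, (l < j)%N -> a l = 0%N) ->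
     P a -> P (addE (epsE j) a)) ->
  forall a, P a.
Proof.
move=> P0 Pstep a; elim: {a}(degE a) {-2}a (leqnn (degE a)) => [|d IH] a;
  case: (expo_head a) => [->|[j [a' [-> a'_low]]]] //; rewrite degE_add_eps // => deg_a.
by apply: Pstep => //; apply: IH.
Qed.

End ExponentInduction.

Lemma prod_ord_from (R : ringType) n (F : 'I_n -> R) (j : 'I_n) :
  (forall l : 'I_n, (l < j)%N -> F l = 1) ->
  \prod_(i < n) F i = F j * \prod_(i < n | (j < i)%N) F i.
Proof.
move=> F_low; pose G t := oapp F 1 (insub t).
have FG (i : 'I_n) : F i = G i by rewrite /G valK.
rewrite (eq_bigr (G \o val)) // -(big_mkord xpredT G).
rewrite (eq_bigr (G \o val)) // -(big_mkord (fun t => j < t)%N G).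
rewrite (big_cat_nat (leq0n j)) ?(ltnW (ltn_ord j)) //= big1_seq ?mul1r => [|t]; last first.
  rewrite mem_index_iota => /andP [_ tj]; rewrite /G.
  by case: insubP => //= o _ ot; apply: F_low; rewrite ot.
rewrite big_ltn ?ltn_ord // FG; congr (_ * _).
rewrite [RHS](big_cat_nat (leq0n j.+1)) //= [X in _ = X * _]big1_seq ?mul1r => [|t]; last first.
  move=> /andP [jt]; rewrite mem_index_iota => /andP [_ tj].
  by move: (leq_trans jt tj); rewrite ltnn.
rewrite [RHS]big_nat_cond [LHS]big_nat_cond; apply: eq_bigl => t.
by case: (_ <= t < n)%N / andP => //= [[jt _]]; rewrite jt.
Qed.

Section PBWLeadingTerms.
Variables (k : fieldType) (R : algType k) (n : nat) (x : 'I_n -> R)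
  (qc : 'I_n -> 'I_n -> k) (pc : 'I_n -> 'I_n -> R)
  (le : expo n -> expo n -> Prop) (cf : R -> expo n -> k).
Hypothesis R_PBW : is_PBW x qc pc le cf.
Local Notation lt := (strict le).
Local Notation mono := (Defs.mono x).

Lemma PBW_admissible : admissible le. Proof. by case: R_PBW. Qed.
Lemma PBW_basis : Defs.coord_basis mono cf. Proof. by case: R_PBW. Qed.

Definition below (v : R) e := supp_in cf (fun d => le d e) v.
Definition strictly_below (v : R) e := supp_in cf (fun d => lt d e) v.
Definition lead (v : R) e := cf v e <> 0 /\ below v e.

Lemma coord_mono a d : cf (mono a) d = (d == a)%:R.
Proof. exact: (coord_basis_vec PBW_basis). Qed.

Lemma lead_mono e : lead (mono e) e.
Proof.
split; first by rewrite coord_mono eqxx; apply/eqP/oner_neq0.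
exact: (supp_in_basis_vec PBW_basis (le_refl PBW_admissible e)).
Qed.

Lemma lead_decomp v e : lead v e ->
  exists w, v = cf v e *: mono e + w /\ strictly_below w e.
Proof.
move=> [_ v_le]; exists (v - cf v e *: mono e); split; first by rewrite addrC subrK.
move=> d; rewrite (coordB PBW_basis) (coordZ PBW_basis) coord_mono.
have [->|de] := eqVneq d e; first by rewrite mulr1 subrr.
by rewrite mulr0 subr0 => /v_le; split=> //; apply/eqP.
Qed.

Lemma leadDr v w e : lead v e -> strictly_below w e -> lead (v + w) e.
Proof.
move=> [nz v_le] w_lt; split.
  rewrite (coordD PBW_basis).
  by case: (eqVneq (cf w e) 0) => [->|/eqP /w_lt /lt_irr //]; rewrite addr0.
apply: (supp_inD PBW_basis) => //; apply: supp_in_sub w_lt => d; exact: ltW.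
Qed.

Lemma leadZ c v e : c != 0 -> lead v e -> lead (c *: v) e.
Proof.
move=> c_nz [nz v_le]; split; last exact: (supp_inZ PBW_basis).
by rewrite (coordZ PBW_basis) => /eqP; rewrite mulf_eq0 (negbTE c_nz) => /eqP.
Qed.

Lemma supp_in_mull r (P Q : expo n -> Prop) v :
  (forall g, P g -> supp_in cf Q (r * mono g)) -> supp_in cf P v -> supp_in cf Q (r * v).
Proof.
move=> Q_rg P_v; have [s [uniq_s supp_s]] := coord_supp PBW_basis v.
rewrite (coord_expand PBW_basis uniq_s supp_s) mulr_sumr.
under eq_bigr => g _ do rewrite -scalerAr.
by apply: (supp_in_sum PBW_basis) => g _ /P_v; apply: Q_rg.
Qed.

Lemma supp_in_mulr r (P Q : expo n -> Prop) v :
  (forall g, P g -> supp_in cf Q (mono g * r)) -> supp_in cf P v -> supp_in cf Q (v * r).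
Proof.
move=> Q_gr P_v; have [s [uniq_s supp_s]] := coord_supp PBW_basis v.
rewrite (coord_expand PBW_basis uniq_s supp_s) mulr_suml.
under eq_bigr => g _ do rewrite -scalerAl.
by apply: (supp_in_sum PBW_basis) => g _ /P_v; apply: Q_gr.
Qed.

Lemma mono0 : mono zeroE = 1.
Proof. by rewrite /Defs.mono big1 // => i _; rewrite ffunE expr0. Qed.

Lemma mulX_mono (j : 'I_n) (a : expo n) : (forall l : 'I_n, (l < j)%N -> a l = 0%N) ->
  x j * mono a = mono (addE (epsE j) a).
Proof.
move=> a_low; have eps_low (l : 'I_n) : (l < j)%N -> epsE j l = 0%N.
  by move=> lj; rewrite ffunE -val_eqE (ltn_eqF lj).
rewrite /Defs.mono (@prod_ord_from _ _ _ j) => [|l lj]; last by rewrite a_low.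
rewrite (@prod_ord_from _ _ _ j) => [|l lj]; last by rewrite ffunE eps_low ?a_low.
rewrite !ffunE eqxx add1n exprS mulrA; congr (_ * _); apply: eq_bigr => i ji.
by rewrite !ffunE -val_eqE (gtn_eqF ji).
Qed.

Section LeadInductionStep.
Variable e : expo n.
Hypothesis IH : forall e', lt e' e -> forall i a, addE (epsE i) a = e' -> lead (x i * mono a) e'.

Lemma below_mulX (j : 'I_n) v f : below v f -> lt (addE (epsE j) f) e -> below (x j * v) (addE (epsE j) f).
Proof.
move=> v_le jf_e; apply: supp_in_mull v_le => g g_f.
have jg_jf := le_addl PBW_admissible (epsE j) g_f.
have [_] := IH (le_lt_trans PBW_admissible jg_jf jf_e) erefl.
by apply: supp_in_sub => d d_jg; exact: (le_trans PBW_admissible d_jg jg_jf).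
Qed.

Lemma below_mul_mono d v f : below v f -> lt (addE d f) e -> below (mono d * v) (addE d f).
Proof.
move=> v_le; elim/expo_ind: d => [|j d d_low IHd]; first by rewrite mono0 mul1r add0E.
rewrite -mulX_mono // -mulrA -!addEA => jdf_e; apply: below_mulX => //; apply: IHd.
exact: (le_lt_trans PBW_admissible (le_addE PBW_admissible _ _) jdf_e).
Qed.

Lemma lead_mulX_low (j : 'I_n) w e1 : lead w e1 -> (forall l : 'I_n, (l < j)%N -> e1 l = 0%N) ->
  addE (epsE j) e1 = e -> lead (x j * w) e.
Proof.
move=> w_lead e1_low je1; have [w' [-> w'_lt]] := lead_decomp w_lead.
rewrite mulrDr -scalerAr mulX_mono // je1; apply: leadDr.
  by apply: leadZ _ (lead_mono e); apply/eqP; case: w_lead.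
apply: supp_in_mull w'_lt => g g_e1.
have jg_e : lt (addE (epsE j) g) e by rewrite -je1; exact: (lt_addl PBW_admissible _ g_e1).
have [_] := IH jg_e erefl.
by apply: supp_in_sub => d d_jg; exact: (le_lt_trans PBW_admissible d_jg jg_e).
Qed.

(* For [j < i] the relation [x_i x_j = q x_j x_i + p_ij] rewrites [x_i x^a]
   into terms that are handled by the induction hypothesis, as [p_ij] is
   below [eps_i + eps_j]. *)
Lemma lead_mulX_mono_step (i : 'I_n) a : addE (epsE i) a = e -> lead (x i * mono a) e.
Proof.
move=> ia_e.
have head_a : (forall l : 'I_n, (l < i)%N -> a l = 0%N) \/
    exists j a', [/\ a = addE (epsE j) a', forall l : 'I_n, (l < j)%N -> a' l = 0%N & (j < i)%N].
  case: (expo_head a) => [->|[j [a' [a_ja' a'_low]]]]; first by left => l _; rewrite ffunE.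
  have [ij|ji] := leqP i j; last by right; exists j, a'.
  left => l li; rewrite a_ja' !ffunE a'_low ?(leq_trans li ij) //.
  by rewrite -val_eqE (ltn_eqF (leq_trans li ij)).
case: head_a => [a_low|[j [a' [a_ja' a'_low ji]]]].
  by rewrite mulX_mono // ia_e; apply: lead_mono.
have [_ _ /(_ j i ji) [q_nz x_ij p_lt]] := R_PBW.
set e1 := addE (epsE i) a'.
have e_je1 : addE (epsE j) e1 = e by rewrite -ia_e a_ja' /e1 !addEA (addEC (epsE j)).
have e1_e : lt e1 e by rewrite -e_je1; exact: (lt_addE_eps PBW_admissible).
rewrite a_ja' -mulX_mono // mulrA x_ij mulrDl -scalerAl -mulrA.
have e1_low (l : 'I_n) : (l < j)%N -> e1 l = 0%N.
  by move=> lj; rewrite !ffunE a'_low // addn0 -val_eqE (ltn_eqF (ltn_trans lj ji)).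
apply: leadDr; first exact: leadZ q_nz (lead_mulX_low (IH e1_e erefl) e1_low e_je1).
have shift_lt g : lt g (addE (epsE j) (epsE i)) -> lt (addE g a') e.
  by move=> g_ji; rewrite -ia_e a_ja' addEA (addEC (epsE i)); exact: (lt_addr PBW_admissible _ g_ji).
have p_supp : supp_in cf (fun g => lt g (addE (epsE j) (epsE i))) (pc i j).
  by move=> g nz; apply: p_lt; apply/eqP.
apply: (supp_in_mulr _ p_supp) => g /shift_lt g_e.
apply: supp_in_sub (below_mul_mono (proj2 (lead_mono a')) g_e) => d d_le.
exact: (le_lt_trans PBW_admissible d_le g_e).
Qed.

End LeadInductionStep.

Lemma lead_mulX_mono (i : 'I_n) a : lead (x i * mono a) (addE (epsE i) a).
Proof.
suff: forall e i a, addE (epsE i) a = e -> lead (x i * mono a) e by apply.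
apply: (well_founded_ind (admissible_wf PBW_admissible)) => e IH {}i {}a ia_e.
exact: (lead_mulX_mono_step IH ia_e).
Qed.

Lemma lead_mulX (j : 'I_n) v e : lead v e -> lead (x j * v) (addE (epsE j) e).
Proof.
move=> v_lead; have [w [-> w_lt]] := lead_decomp v_lead.
rewrite mulrDr -scalerAr; apply: leadDr.
  by apply: leadZ _ (lead_mulX_mono _ _); apply/eqP; case: v_lead.
apply: supp_in_mull w_lt => g g_e; have jg_je := lt_addl PBW_admissible (epsE j) g_e.
have [_] := lead_mulX_mono j g.
by apply: supp_in_sub => d d_jg; exact: (le_lt_trans PBW_admissible d_jg jg_je).
Qed.

Lemma lead_mul_mono d v e : lead v e -> lead (mono d * v) (addE d e).
Proof.
move=> v_lead; elim/expo_ind: d => [|j d d_low IHd]; first by rewrite mono0 mul1r add0E.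
by rewrite -mulX_mono // -mulrA -addEA; apply: lead_mulX.
Qed.

End PBWLeadingTerms.

(** * The enveloping algebra and the multiplication map *)

(* [m] sends the PBW monomial of exponent [(a, b)], i.e. [x^a (x) x^(b^op)],
   to an element of leading exponent [a + b^op]. *)
Definition mult_exp n (d : expo n * expo n) : expo n := addE d.1 (revE d.2).

Section EnvelopingAlgebra.
Variables (k : fieldType) (n : nat) (R : algType k) (x : 'I_n -> R)
  (qc : 'I_n -> 'I_n -> k) (pc : 'I_n -> 'I_n -> R)
  (le : expo n -> expo n -> Prop) (cf : R -> expo n -> k).
Hypothesis R_PBW : is_PBW x qc pc le cf.
Variables (Renv : algType k) (tens : R -> R -> Renv) (cf2 : Renv -> expo n * expo n -> k).
Hypothesis R_env : is_env x tens cf2.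
Variable mm : {linear Renv -> R}.
Hypothesis mm_mult : is_mult tens mm.
Local Notation lt := (strict le).
Local Notation mono := (Defs.mono x).

Lemma env_basis :
  Defs.coord_basis (fun d : expo n * expo n => tens (mono d.1) (mono d.2)) cf2.
Proof. by case: R_env => _ [_ [_ [_ [_ []]]]]. Qed.

Lemma coord_env_vec a b d : cf2 (tens (mono a) (mono b)) d = (d == (a, b))%:R.
Proof. exact: (coord_basis_vec env_basis (a, b)). Qed.

Lemma tensM a b c d : tens a b * tens c d = tens (a * c) (d * b).
Proof. by case: R_env => _ [_ [_ [_ []]]]. Qed.

Lemma tens11 : tens 1 1 = 1.
Proof. by case: R_env => _ [_ [_ [_ [_ []]]]]. Qed.

Lemma tens_linear_l a b c (z : k) : tens (z *: a + b) c = z *: tens a c + tens b c.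
Proof. by case: R_env => Dl [_ [Zl _]]; rewrite Dl Zl. Qed.

Lemma tens_linear_r a b c (z : k) : tens c (z *: a + b) = z *: tens c a + tens c b.
Proof. by case: R_env => _ [Dr [_ [Zr _]]]; rewrite Dr Zr. Qed.

Lemma mm_tens_mul r r' u : mm (tens r r' * u) = r * mm u * r'.
Proof.
have [s [uniq_s supp_s]] := coord_supp env_basis u.
rewrite (coord_expand env_basis uniq_s supp_s) mulr_sumr !linear_sum mulr_sumr mulr_suml.
apply: eq_bigr => t _; rewrite -scalerAr tensM !linearZ /= !mm_mult.
by rewrite -scalerAr -scalerAl !mulrA.
Qed.

Lemma revE2_eq (d e : expo n * expo n) : ((d.1, revE d.2) == (e.1, revE e.2)) = (d == e).
Proof. by case: d e => [? ?] [? ?]; rewrite !xpair_eqE (inj_eq (can_inj (@revEK n))). Qed.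

Lemma coefEnv_embed (iota : R -> Renv) (eps : expo n -> expo n * expo n) :
  (forall (z : k) u v, iota (z *: u + v) = z *: iota u + iota v) -> injective eps ->
  (forall a, iota (mono a) = tens (mono (eps a).1) (mono (revE (eps a).2))) ->
  forall r, (forall a, coefEnv cf2 (iota r) (eps a) = cf r a) /\
    (forall d, (forall a, d <> eps a) -> coefEnv cf2 (iota r) d = 0).
Proof.
move=> iota_lin eps_inj iota_mono r.
have iota0 : iota 0 = 0.
  by apply: (@addrI _ (iota 0)); rewrite -{1}(scale1r (iota 0)) -iota_lin scale1r !addr0.
have [s [uniq_s supp_s]] := coord_supp (PBW_basis R_PBW) r.
have coef_r d : coefEnv cf2 (iota r) d = \sum_(a <- s) cf r a * (d == eps a)%:R.
  rewrite {1}(coord_expand (PBW_basis R_PBW) uniq_s supp_s) /coefEnv.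
  elim: (s) => [|a t IH]; first by rewrite !big_nil iota0 (coord0 env_basis).
  rewrite !big_cons iota_lin (coordD env_basis) (coordZ env_basis) IH.
  by rewrite iota_mono coord_env_vec revE2_eq.
split=> [a|d d_out]; rewrite coef_r; last first.
  by rewrite big1 // => a _; case: eqP => [/d_out //|_]; rewrite mulr0.
rewrite [in RHS](coord_expand (PBW_basis R_PBW) uniq_s supp_s) (coord_sum (PBW_basis R_PBW)).
apply: eq_bigr => b _.
by rewrite (coordZ (PBW_basis R_PBW)) (coord_mono R_PBW) (inj_eq eps_inj).
Qed.

Lemma lead_mm u e : coefEnv cf2 u e <> 0 ->
  (forall d, d <> e -> coefEnv cf2 u d <> 0 -> lt (mult_exp d) (mult_exp e)) ->
  lead le cf (mm u) (mult_exp e).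
Proof.
move=> nz lower; set e2 := (e.1, revE e.2).
have [s [uniq_s supp_s]] := coord_supp env_basis u.
have -> : mm u = \sum_(t <- s) cf2 u t *: (mono t.1 * mono t.2).
  rewrite {1}(coord_expand env_basis uniq_s supp_s) linear_sum.
  by apply: eq_bigr => t _; rewrite linearZ /= mm_mult.
rewrite (bigD1_seq e2) ?supp_s //=; apply: (leadDr R_PBW).
  by apply: (leadZ R_PBW); [apply/eqP; exact: nz | exact: (lead_mul_mono R_PBW _ (lead_mono R_PBW _))].
apply: (supp_in_sum (PBW_basis R_PBW)) => t t_e2 t_nz.
have t_lt : lt (addE t.1 t.2) (mult_exp e).
  have := lower (t.1, revE t.2); rewrite /mult_exp /= revEK; apply.
    by move=> te; move: t_e2; rewrite /e2 -te /= revEK -surjective_pairing eqxx.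
  by rewrite /coefEnv /= revEK; case: (t) t_nz.
have [_ t_below] := lead_mul_mono R_PBW t.1 (lead_mono R_PBW t.2).
by apply: supp_in_sub t_below => d d_le; exact: (le_lt_trans (PBW_admissible R_PBW) d_le t_lt).
Qed.

End EnvelopingAlgebra.

Lemma is_exp_rowP (k : fieldType) (T : zmodType) (E : Type) (coef : T -> E -> k)
    (lt : E -> E -> Prop) m (f : 'rV[T]_m) e (i : 'I_m) :
  is_exp coef lt f (e, i) <->
  [/\ forall j : 'I_m, (j < i)%N -> forall d, coef (f 0 j) d = 0,
      coef (f 0 i) e <> 0 &
      forall d, coef (f 0 i) d <> 0 -> d = e \/ lt d e].
Proof.
split=> [[nz f_max]|[low nz f_max]].
  split=> [j ji d | | d d_nz]; [ | exact: nz | ].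
    apply: NNPP => /(f_max (d, j)) [[= _ ji']|[/= ij|[/= ji' _]]]; move: ji;
      by rewrite ?ji' ?ltnn // ltnNge (ltnW ij).
  by case: (f_max (d, i) d_nz) => [[= ->]|[/=|[_ de]]]; [left | rewrite ltnn | right].
split=> // [[d j]] /= d_nz.
case: (ltngtP i j) => [ij|ji|/val_inj ij]; first by right; left.
  by case: d_nz; apply: low.
by subst j; case: (f_max d d_nz) => [->|de]; [left | right; right].
Qed.

Lemma is_exp_neq0 (k : fieldType) (T : zmodType) (E : Type) (coef : T -> E -> k)
    (lt : E -> E -> Prop) m (f : 'rV[T]_m) e :
  (forall d, coef 0 d = 0) -> is_exp coef lt f e -> f != 0.
Proof. by move=> coef0 [nz _]; apply/eqP => f0; apply: nz; rewrite f0 mxE coef0. Qed.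

Section RowsOfPBW.
Variables (k : fieldType) (R : algType k) (n : nat) (x : 'I_n -> R)
  (qc : 'I_n -> 'I_n -> k) (pc : 'I_n -> 'I_n -> R)
  (le : expo n -> expo n -> Prop) (cf : R -> expo n -> k).
Hypothesis R_PBW : is_PBW x qc pc le cf.
Local Notation lt := (strict le).

Lemma is_exp_leadP m (f : 'rV[R]_m) e (i : 'I_m) :
  is_exp cf lt f (e, i) <-> (forall j : 'I_m, (j < i)%N -> f 0 j = 0) /\ lead le cf (f 0 i) e.
Proof.
rewrite is_exp_rowP; split=> [[low nz f_max] | [low [nz f_le]]].
  split=> [j /low /(coord_eq0 (PBW_basis R_PBW)) //|]; split=> // d /f_max [->|/ltW //].
  exact: le_refl (PBW_admissible R_PBW) _.
split=> // [j /low -> d|d /f_le d_e]; first exact: (coord0 (PBW_basis R_PBW)).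
by case: (classic (d = e)) => [|de]; [left | right].
Qed.


Lemma Exp_set_shift s (M : 'rV[R]_s -> Prop) g a i c : subbimodule M ->
  M g -> is_exp cf lt g (a, i) -> Exp_set cf lt M (addE c a, i).
Proof.
move=> [_ _ M_act] Mg /is_exp_leadP [g_low g_lead].
have cg_exp : is_exp cf lt (bactR (Defs.mono x c) 1 g) (addE c a, i).
  apply/is_exp_leadP; split=> [j /g_low gj|]; first by rewrite mxE gj mulr0 mul0r.
  by rewrite mxE mulr1; apply: (lead_mul_mono R_PBW).
by exists (bactR (Defs.mono x c) 1 g); split=> //; [apply: M_act | apply/eqP/(is_exp_neq0 (coord0 (PBW_basis R_PBW)) cg_exp)].
Qed.

End RowsOfPBW.

Section GeneratedBimodules.
Variables (k : fieldType) (R Renv : algType k) (tens : R -> R -> Renv) (mm : Renv -> R).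

Lemma vmul_row_mx m1 m2 q (A : 'rV[Renv]_m1) (B : 'rV[Renv]_m2) (K : 'M[R]_(m1 + m2, q)) :
  vmul tens mm (row_mx A B) K = vmul tens mm A (usubmx K) + vmul tens mm B (dsubmx K).
Proof.
apply/rowP => j; rewrite !mxE big_split_ord; congr (_ + _); apply: eq_bigr => i _.
  by rewrite row_mxEl mxE.
by rewrite row_mxEr mxE.
Qed.

Lemma bigenR_sub s (M : 'rV[R]_s -> Prop) (G : seq 'rV[R]_s) : subbimodule M ->
  {in G, forall g, M g} -> forall f, bigenR G f -> M f.
Proof.
move=> [M0 MD M_act] GM f [l [lG ->]]; elim: l lG => [|y l IH]; first by rewrite big_nil.
by rewrite /= big_cons => /andP [yG lG]; apply: MD; [apply/M_act/GM | apply: IH].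
Qed.

Lemma bigenR_filter0 s (G : seq 'rV[R]_s) f : bigenR G f <-> bigenR [seq g <- G | g != 0] f.
Proof.
split=> [[l [lG ->]]|[l [lG ->]]]; last first.
  by exists l; split=> //; apply: sub_all lG => y; rewrite mem_filter => /andP [].
exists [seq y <- l | y.1.1 != 0]; split.
  by rewrite all_filter; apply: sub_all lG => y yG; apply/implyP; rewrite mem_filter => ->.
rewrite big_filter [LHS](bigID (fun y => y.1.1 != 0)) /= [X in _ + X]big1 ?addr0 //.
by move=> y /negPn /eqP ->; apply/matrixP => i j; rewrite !mxE mulr0 mul0r.
Qed.

End GeneratedBimodules.

Section EnvOrderEmbeddings.
Variables (n : nat) (le : expo n -> expo n -> Prop).
Hypothesis le_adm : admissible le.
Local Notation lt := (strict le).

Lemma tens_l_order_embed ltE : ltE = star_lt le \/ ltE = c_lt le ->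
  (forall a b, lt a b -> ltE (a, zeroE) (b, zeroE)) /\
  (forall d a, ltE d (a, zeroE) -> lt (mult_exp d) a).
Proof.
have lt0 := @not_lt0E _ _ le_adm; rewrite /mult_exp.
case=> ->; split=> [a b ab|[d1 d2] a]; rewrite /star_lt /c_lt /= ?revE0 ?addE0.
- by right.
- by case=> [/lt0 //|[-> d1a]]; rewrite revE0 addE0.
- by left.
- by case=> [//|[_ /lt0]].
Qed.

Lemma tens_r_order_embed ltE : ltE = lowstar_lt le \/ ltE = lowc_lt le ->
  (forall a b, lt a b -> ltE (zeroE, revE a) (zeroE, revE b)) /\
  (forall d a, ltE d (zeroE, revE a) -> lt (mult_exp d) a).
Proof.
have lt0 := @not_lt0E _ _ le_adm; rewrite /mult_exp.
case=> ->; split=> [a b ab|[d1 d2] a]; rewrite /lowstar_lt /lowc_lt /= ?revEK ?add0E.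
- by right.
- by case=> [/lt0 //|[-> d2a]]; rewrite add0E.
- by left.
- by case=> [//|[_ /lt0]].
Qed.

End EnvOrderEmbeddings.

(** * Generators of [M] from generators of the syzygies *)

Section Main.
Variables (k : fieldType) (n : nat) (R : algType k) (x : 'I_n -> R)
  (qc : 'I_n -> 'I_n -> k) (pc : 'I_n -> 'I_n -> R)
  (le : expo n -> expo n -> Prop) (cf : R -> expo n -> k).
Hypothesis R_PBW : is_PBW x qc pc le cf.
Variables (Renv : algType k) (tens : R -> R -> Renv) (cf2 : Renv -> expo n * expo n -> k).
Hypothesis R_env : is_env x tens cf2.
Variable mm : {linear Renv -> R}.
Hypothesis mm_mult : is_mult tens mm.
Variables (s : nat) (M : 'rV[R]_s -> Prop) (p q : nat) (H : 'M[R]_(s + p, q)).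
Hypothesis M_bimod : subbimodule M.
Hypothesis H1_mult : forall h : 'rV[Renv]_s,
  vmul tens mm (tens1 tens (mmv mm h)) (usubmx H) = vmul tens mm h (usubmx H).
Hypothesis M_Syz : forall f : 'rV[R]_s,
  M f <-> exists h2 : 'rV[Renv]_p, Syz tens mm H (row_mx (tens1 tens f) h2).
Variable hs : seq 'rV[Renv]_(s + p).
Hypothesis Syz_gen : forall h, Syz tens mm H h <-> bigenE tens hs h.
Local Notation lt := (strict le).
Local Notation Gs := [seq mmv mm (lsubmx h) | h <- hs].

Lemma Syz_lsubmx_M h : Syz tens mm H h -> M (mmv mm (lsubmx h)).
Proof.
move=> syz_h; apply/M_Syz; exists (rsubmx h); move: syz_h.
by rewrite /Syz -{1}(hsubmxK h) !vmul_row_mx H1_mult.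
Qed.

Lemma Gs_M g : g \in Gs -> M g.
Proof.
case/mapP => h h_hs ->; apply/Syz_lsubmx_M/Syz_gen.
exists [:: (h, 1, 1)]; rewrite /= h_hs big_seq1; split=> //.
by apply/matrixP => i j; rewrite !mxE (tens11 R_env) mul1r.
Qed.

Lemma M_bigenR f : M f <-> bigenR Gs f.
Proof.
split=> [|gen_f]; last exact: (bigenR_sub M_bimod Gs_M gen_f).
move/M_Syz => [h2 /Syz_gen [l [l_hs sum_l]]].
exists [seq (mmv mm (lsubmx y.1.1), y.1.2, y.2) | y <- l]; split.
  by rewrite all_map; apply: sub_all l_hs => y /= y_hs; apply: map_f.
rewrite big_map; apply/rowP => j.
have := congr1 (fun h : 'rV[Renv]_(s + p) => mm (h 0 (lshift p j))) sum_l.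
rewrite /= row_mxEl mxE mm_mult mulr1 => ->.
rewrite !summxE linear_sum; apply: eq_bigr => y _.
by rewrite !mxE (mm_tens_mul R_env mm_mult).
Qed.

Lemma exp_mmv_lsubmx (ltE : expo n * expo n -> expo n * expo n -> Prop) g e (i : 'I_s) :
  is_exp (coefEnv cf2) ltE g (e, lshift p i) ->
  (forall d, ltE d e -> lt (mult_exp d) (mult_exp e)) ->
  is_exp cf lt (mmv mm (lsubmx g)) (mult_exp e, i).
Proof.
move=> /is_exp_rowP [g_low g_nz g_max] compat; apply/(is_exp_leadP R_PBW); split.
  move=> j ji; rewrite !mxE (_ : g 0 _ = 0) ?linear0 //.
  apply: (coord_eq0 (env_basis R_env)) => t.
  by have := g_low (lshift p j) ji (t.1, revE t.2); rewrite /coefEnv /= revEK -surjective_pairing.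
rewrite !mxE; apply: (lead_mm R_PBW R_env mm_mult) => // d de d_nz.
by case: (g_max d d_nz) => [/de []|]; apply: compat.
Qed.

Lemma Exp_M_back e : (exists2 g, g \in [seq g <- Gs | g != 0] &
    exists eg, [/\ is_exp cf lt g eg, eg.2 = e.2 & shiftR eg.1 e.1]) -> Exp_set cf lt M e.
Proof.
case: e => a i [g]; rewrite mem_filter => /andP [_ /Gs_M Mg] [[b j] [g_exp /= <- [c ->]]].
by rewrite addEC; exact: (Exp_set_shift R_PBW c M_bimod Mg g_exp).
Qed.

(* The two families of orders are handled alike: [iota] embeds [R] into [Renv]
   so that the leading exponent [a] of an entry becomes [eps a], and any
   leading exponent dividing [eps a] is again of this form. *)
Section ExpForth.
Variables (ltE : expo n * expo n -> expo n * expo n -> Prop) (iota : R -> Renv)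
  (eps : expo n -> expo n * expo n).
Hypothesis iota_lin : forall (z : k) u v, iota (z *: u + v) = z *: iota u + iota v.
Hypothesis iota_mono : forall a,
  iota (Defs.mono x a) = tens (Defs.mono x (eps a).1) (Defs.mono x (revE (eps a).2)).
Hypothesis iota_Syz : forall f h2,
  Syz tens mm H (row_mx (tens1 tens f) h2) -> Syz tens mm H (row_mx (map_mx iota f) h2).
Hypothesis eps_inj : injective eps.
Hypothesis eps_mono : forall a b, lt a b -> ltE (eps a) (eps b).
Hypothesis eps_shift : forall d a, shiftEnv d (eps a) -> exists2 b, d = eps b & shiftR b a.
Hypothesis eps_compat : forall d a, ltE d (eps a) -> lt (mult_exp d) a.
Hypothesis mult_exp_eps : forall a, mult_exp (eps a) = a.

Lemma exp_iota_row f h2 a (i : 'I_s) : is_exp cf lt f (a, i) ->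
  is_exp (coefEnv cf2) ltE (row_mx (map_mx iota f) h2) (eps a, lshift p i).
Proof.
move=> /(is_exp_leadP R_PBW) [f_low [f_nz f_le]].
have iota_coef := coefEnv_embed R_PBW R_env iota_lin eps_inj iota_mono.
have iota_coef_out r d : (forall b, d <> eps b) -> coefEnv cf2 (iota r) d = 0.
  by move=> d_out; case: (iota_coef r) => _; apply.
have iota_coef0 d : coefEnv cf2 (iota 0) d = 0.
  case: (classic (exists b, d = eps b)) => [[b ->]|d_out]; last first.
    by apply: iota_coef_out => b db; apply: d_out; exists b.
  by case: (iota_coef 0) => -> _; apply: (coord0 (PBW_basis R_PBW)).
apply/is_exp_rowP; split=> [j ji d||d]; last rewrite row_mxEl mxE.
- have js : (j < s)%N := ltn_trans ji (ltn_ord i).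
  have -> : j = lshift p (Ordinal js) by apply: val_inj.
  by rewrite row_mxEl mxE f_low.
- by rewrite row_mxEl mxE; case: (iota_coef (f 0 i)) => ->.
case: (classic (exists b, d = eps b)) => [[b ->]|d_out]; last first.
  by rewrite iota_coef_out // => b db; apply: d_out; exists b.
case: (iota_coef (f 0 i)) => -> _ /f_le b_a.
by case: (classic (b = a)) => [->|ba]; [left | right; apply: eps_mono].
Qed.

Lemma Exp_M_forth : exp_cond (coefEnv cf2) ltE shiftEnv (Syz tens mm H) hs ->
  forall e, Exp_set cf lt M e -> exists2 g, g \in [seq g <- Gs | g != 0] &
    exists eg, [/\ is_exp cf lt g eg, eg.2 = e.2 & shiftR eg.1 e.1].
Proof.
move=> syz_exp [a i] [f [Mf _ f_exp]].
have [h2 /iota_Syz u_syz] := (M_Syz f).1 Mf.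
have u_exp := exp_iota_row h2 f_exp.
have u_nz := is_exp_neq0 (fun d => coord0 (env_basis R_env) _) u_exp.
have [g g_hs [[e j] [g_exp /= ji /eps_shift [b e_b b_a]]]] :=
  (syz_exp (eps a, lshift p i)).1 (ex_intro _ _ (And3 u_syz (elimN eqP u_nz) u_exp)).
have compat d : ltE d (eps b) -> lt (mult_exp d) (mult_exp (eps b)).
  by rewrite mult_exp_eps; apply: eps_compat.
subst e j; have := exp_mmv_lsubmx g_exp compat; rewrite mult_exp_eps => mg_exp.
exists (mmv mm (lsubmx g)); last by exists (b, i).
by rewrite mem_filter (is_exp_neq0 (coord0 (PBW_basis R_PBW)) mg_exp) (map_f _ g_hs).
Qed.

End ExpForth.

Lemma Syz_tens_r f h2 : Syz tens mm H (row_mx (tens1 tens f) h2) ->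
  Syz tens mm H (row_mx (map_mx (tens 1) f) h2).
Proof.
have mmv_f : mmv mm (map_mx (tens 1) f) = f.
  by apply/matrixP => i j; rewrite !mxE mm_mult mul1r.
by rewrite /Syz !vmul_row_mx -{1}mmv_f H1_mult.
Qed.

Lemma Exp_M_forth_tens_l ltE : ltE = star_lt le \/ ltE = c_lt le ->
  exp_cond (coefEnv cf2) ltE shiftEnv (Syz tens mm H) hs ->
  forall e, Exp_set cf lt M e -> exists2 g, g \in [seq g <- Gs | g != 0] &
    exists eg, [/\ is_exp cf lt g eg, eg.2 = e.2 & shiftR eg.1 e.1].
Proof.
move=> /(tens_l_order_embed (PBW_admissible R_PBW)) [eps_mono eps_compat].
apply: (@Exp_M_forth ltE (tens^~ 1) (fun a => (a, zeroE))) => //.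
- by move=> z u v; apply: (tens_linear_l R_env).
- by move=> a; rewrite revE0 mono0.
- by move=> a b [].
- move=> [d1 d2] a [c [d [/= a_d1 /esym /addE_eq0 d2_0]]].
  by exists d1; [rewrite d2_0 | exists c].
- by move=> a; rewrite /mult_exp revE0 addE0.
Qed.

Lemma Exp_M_forth_tens_r ltE : ltE = lowstar_lt le \/ ltE = lowc_lt le ->
  exp_cond (coefEnv cf2) ltE shiftEnv (Syz tens mm H) hs ->
  forall e, Exp_set cf lt M e -> exists2 g, g \in [seq g <- Gs | g != 0] &
    exists eg, [/\ is_exp cf lt g eg, eg.2 = e.2 & shiftR eg.1 e.1].
Proof.
move=> /(tens_r_order_embed (PBW_admissible R_PBW)) [eps_mono eps_compat].
apply: (@Exp_M_forth ltE (tens 1) (fun a => (zeroE, revE a))) => //.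
- by move=> z u v; apply: (tens_linear_r R_env).
- by move=> a; rewrite revEK mono0.
- exact: Syz_tens_r.
- by move=> a b [/(can_inj (@revEK n))].
- move=> [d1 d2] a [c [d [/= /esym /addE_eq0 d1_0 a_d2]]].
  exists (revE d2); first by rewrite d1_0 revEK.
  by exists (revE d); rewrite -revED -a_d2 revEK.
- by move=> a; rewrite /mult_exp revEK add0E.
Qed.

End Main.

Unset Implicit Arguments.

Theorem mainTheorem7
  (k : fieldType) (n : nat)
  (* the PBW algebra R = k{x_1..x_n; Q, le}, with coordinates cf in the standard monomials *)
  (R : algType k) (x : 'I_n -> R) (qc : 'I_n -> 'I_n -> k) (pc : 'I_n -> 'I_n -> R)
  (le : expo n -> expo n -> Prop) (cf : R -> expo n -> k)
  (HR : is_PBW x qc pc le cf)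
  (* R^env = R (x)_k R^op, with a (x) b = tens a b and coordinates cf2 *)
  (Renv : algType k) (tens : R -> R -> Renv) (cf2 : Renv -> expo n * expo n -> k)
  (Henv : is_env x tens cf2)
  (* the multiplication map m : R^env -> R *)
  (mm : {linear Renv -> R}) (Hmm : is_mult tens mm)
  (s : nat) (M : 'rV[R]_s -> Prop) (HM : subbimodule M)
  (p q : nat) (hp : (0 < p)%N) (hq : (0 < q)%N) (H : 'M[R]_(s + p, q))
  (Hi : forall h : 'rV[Renv]_s,
      vmul tens mm (tens1 tens (mmv mm h)) (usubmx H) = vmul tens mm h (usubmx H))
  (Hii : forall f : 'rV[R]_s,
      M f <-> exists h2 : 'rV[Renv]_p, Syz tens mm H (row_mx (tens1 tens f) h2))
  (hs : seq 'rV[Renv]_(s + p)) :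
  let Gs := [seq mmv mm (lsubmx h) | h <- hs] in
  ((forall h, Syz tens mm H h <-> bigenE tens hs h) ->
     forall f, M f <-> bigenR Gs f) /\
  (forall ltE : expo n * expo n -> expo n * expo n -> Prop,
     ltE = star_lt le \/ ltE = c_lt le \/ ltE = lowstar_lt le \/ ltE = lowc_lt le ->
     (forall h, Syz tens mm H h <-> bigenE tens hs h) ->
     GB (coefEnv cf2) ltE shiftEnv (@lgenE _ Renv (s + p)) (Syz tens mm H) hs ->
     GB cf (strict le) shiftR (@bigenR _ R s) M [seq g <- Gs | g != 0]).
Proof.
have M_gen := M_bigenR Henv Hmm HM Hi Hii.
move=> Gs; split=> [Syz_gen | ltE ltE_cases Syz_gen [_ _ hs_exp]]; first exact: M_gen.
split=> [g|f|e].
- rewrite mem_filter => /andP [g_nz /(Gs_M Henv Hi Hii Syz_gen)].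
  by split=> //; apply/eqP.
- by rewrite -bigenR_filter0; apply: M_gen.
split; last exact: (Exp_M_back HR Henv HM Hi Hii Syz_gen).
case: ltE_cases => [|[|[|]]] ltE_eq.
- by apply: (Exp_M_forth_tens_l HR Henv Hmm Hii (or_introl ltE_eq)).
- by apply: (Exp_M_forth_tens_l HR Henv Hmm Hii (or_intror ltE_eq)).
- by apply: (Exp_M_forth_tens_r HR Henv Hmm Hi Hii (or_introl ltE_eq)).
- by apply: (Exp_M_forth_tens_r HR Henv Hmm Hi Hii (or_intror ltE_eq)).
Qed.
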